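(* Let $k$ be a field of characteristic zero, let $q\in k$ satisfy $q^m=1$ with $m$ the minimal positive such integer, and assume $k$ contains all $m$th roots of unity. Let $f\in k(x,y)$ and suppose $f=\tau_{x,q}(g)-g+c$ with $g\in k(x,y)$ and $c\in k(y)(x^m)$. Let $\partial_y\in\{\Delta_y,D_y\}$. Then $f$ is exact with respect to $(\Delta_{x,q},\partial_y)$ if and only if $c=\partial_y(d)$ for some $d\in k(y)(x^m)$.
   Context: On $k(x,y)$: $\tau_{x,q}(f(x,y))=f(qx,y)$, $\sigma_y(f(x,y))=f(x,y+1)$, $\Delta_{x,q}=\tau_{x,q}-1$, $\Delta_y=\sigma_y-1$, and $D_y=\partial/\partial y$. A rational function $f\in k(x,y)$ is exact with respect to a pair $(\partial_x,\partial_y)$ of such operators if $f=\partial_x(g)+\partial_y(h)$ for some $g,h\in k(x,y)$. Here $k(y)(x^m)$ denotes the subfield of $k(x,y)$ generated over $k(y)$ by $x^m$. *)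

From HB Require Import structures.
From mathcomp Require Import all_boot all_order all_algebra generic_quotient fraction.
Set Implicit Arguments. Unset Strict Implicit. Unset Printing Implicit Defensive.
Import Order.TTheory GRing.Theory Num.Theory.
Local Open Scope ring_scope.

Notation "x %:F" := (@FracField.tofrac _ x).

(* k[x,y] is represented as {poly {poly k}} = (k[y])[x]:                    *)
(*   the OUTER indeterminate 'X is x, the INNER one ('X%:P) is y.          *)

Definition ratfun (k : fieldType) := {fraction {poly {poly k}}}.

Lemma frac_repr (R : idomainType) (f : {fraction R}) :
  exists p : R * R, (p.2 != 0) && (f == p.1%:F / p.2%:F).
Proof.
elim/quotW: f => x.
exists (\n_x, \d_x); rewrite denom_ratioP /=.
apply/eqP.
have -> : (\n_x)%:F / (\d_x)%:F = (\pi_({fraction R}) (Ratio \n_x \d_x))%qT.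
  unlock FracField.tofrac.
  rewrite /GRing.inv /= -FracField.pi_inv /GRing.mul /= -FracField.pi_mul.
  apply/eqmodP; rewrite /= FracField.equivfE /FracField.mulf /FracField.invf.
  by rewrite !numden_Ratio ?mulr1 ?mul1r ?oner_neq0 ?denom_ratioP // mulrC.
by rewrite Ratio_numden.
Qed.

Definition fnum (R : idomainType) (f : {fraction R}) : R := (xchoose (frac_repr f)).1.
Definition fden (R : idomainType) (f : {fraction R}) : R := (xchoose (frac_repr f)).2.

(* For phi an injective ring
   endomorphism this is the unique extension (independent of the choice). *)
Definition frac_lift (R : idomainType) (phi : R -> R) (f : {fraction R}) :
  {fraction R} := (phi (fnum f))%:F / (phi (fden f))%:F.

Definition tauP (k : fieldType) (q : k) (p : {poly {poly k}}) : {poly {poly k}} :=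
  p \Po (q%:P *: 'X).
Definition sigmaP (k : fieldType) (p : {poly {poly k}}) : {poly {poly k}} :=
  map_poly (fun c : {poly k} => c \Po ('X + 1)) p.
Definition DyP (k : fieldType) (p : {poly {poly k}}) : {poly {poly k}} :=
  map_poly (fun c : {poly k} => c^`()) p.

Definition tau_xq (k : fieldType) (q : k) (f : ratfun k) : ratfun k :=
  frac_lift (tauP q) f.
Definition sigma_y (k : fieldType) (f : ratfun k) : ratfun k :=
  frac_lift (@sigmaP k) f.
Definition Delta_xq (k : fieldType) (q : k) (f : ratfun k) : ratfun k :=
  tau_xq q f - f.
Definition Delta_y (k : fieldType) (f : ratfun k) : ratfun k :=
  sigma_y f - f.
Definition D_y (k : fieldType) (f : ratfun k) : ratfun k :=
  ((DyP (fnum f)) * fden f - fnum f * DyP (fden f))%:F / ((fden f) ^+ 2)%:F.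

Inductive yop := YShift | YDiff.
Definition partial_y (k : fieldType) (o : yop) : ratfun k -> ratfun k :=
  match o with YShift => @Delta_y k | YDiff => @D_y k end.

Definition exact (k : fieldType) (dx dy : ratfun k -> ratfun k) (f : ratfun k) :=
  exists g h : ratfun k, f = dx g + dy h.

(* The subfield k(y)(x^m) of k(x,y): quotients P(x^m,y)/Q(x^m,y) of
   polynomials in x^m with coefficients in k[y] (this is exactly the
   subfield generated over k(y) by x^m). *)
Definition in_kyxm (k : fieldType) (m : nat) (c : ratfun k) : Prop :=
  exists P Q : {poly {poly k}},
    Q != 0 /\ c = (P \Po 'X^m)%:F / (Q \Po 'X^m)%:F.

From HB Require Import structures.
From mathcomp Require Import all_boot all_order all_algebra generic_quotient fraction.
From mathcomp Require Import ring.
Import GRing.Theory.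
Local Open Scope ring_scope.

(* Write T for tau_{x,q}.  As q has exact order m, T is an automorphism of
   k(x,y) of order m, and its fixed field is k(y)(x^m): a fixed fraction a/b
   can be rewritten over the T-invariant denominator prod_{i<m} T^i(b), and a
   T-invariant polynomial only involves powers of x divisible by m.  Both
   choices of partial_y are additive and commute with T, so the average
   pi = (1/m) sum_{i<m} T^i (m <> 0 in characteristic zero) projects onto
   k(y)(x^m), kills the image of Delta_{x,q} and commutes with partial_y.
   Applying pi to Delta_{x,q}(g) + c = Delta_{x,q}(G) + partial_y(H) gives
   c = partial_y(pi H); conversely f = Delta_{x,q}(g) + partial_y(d). *)

Lemma big_ord_cycle (R : Type) (idx : R) (op : Monoid.com_law idx) n
    (F : nat -> R) :
  F n = F 0%N -> \big[op/idx]_(i < n) F i.+1 = \big[op/idx]_(i < n) F i.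
Proof.
case: n => [|n] Fn; first by rewrite !big_ord0.
by rewrite big_ord_recr big_ord_recl /= Fn Monoid.mulmC.
Qed.

Lemma raddf_divn (F : fieldType) (f : {additive F -> F}) n x :
  n%:R != 0 :> F -> f (x / n%:R) = f x / n%:R.
Proof.
move=> n0; apply: (mulIf n0) => /=.
by rewrite (divfK n0) mulr_natr -raddfMn -(mulr_natr (x / _)) (divfK n0).
Qed.

Section Averaging.
Context {F : fieldType} {m : nat} {T : F -> F}.
Hypothesis T_zmod : zmod_morphism T.
HB.instance Definition _ := GRing.isZmodMorphism.Build F F T T_zmod.
Hypothesis m_neq0 : m%:R != 0 :> F.
Hypothesis T_order : forall u, iter m T u = u.

Definition average u := (\sum_(i < m) iter i T u) / m%:R.

Lemma iterB i : {morph iter i T : u v / u - v}.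
Proof. by elim: i => // i IH u v; rewrite !iterS IH raddfB. Qed.

Lemma sum_iter_cycle u : \sum_(i < m) iter i.+1 T u = \sum_(i < m) iter i T u.
Proof. exact: (@big_ord_cycle _ _ _ _ (fun i => iter i T u) (T_order u)). Qed.

Lemma average_is_zmod_morphism : zmod_morphism average.
Proof.
move=> u v; rewrite /average -mulrBl -sumrB.
by congr (_ / _); apply: eq_bigr => i _; rewrite iterB.
Qed.
HB.instance Definition _ :=
  GRing.isZmodMorphism.Build F F average average_is_zmod_morphism.

Lemma average_fixed u : T (average u) = average u.
Proof.
rewrite /average raddf_divn // raddf_sum.
by under eq_bigr do rewrite -iterS; rewrite sum_iter_cycle.
Qed.

Lemma average_fixed_id c : T c = c -> average c = c.
Proof.
move=> Tc; rewrite /average (eq_bigr (fun=> c)) => [|i _]; last first.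
  by elim: (nat_of_ord i) => //= j ->.
by rewrite sumr_const card_ord -(mulr_natr c) (mulfK m_neq0).
Qed.

Lemma average_coboundary v : average (T v - v) = 0.
Proof.
rewrite /average; under eq_bigr do rewrite iterB -iterSr.
by rewrite sumrB sum_iter_cycle subrr mul0r.
Qed.

Context {D : F -> F}.
Hypothesis D_zmod : zmod_morphism D.
HB.instance Definition _ := GRing.isZmodMorphism.Build F F D D_zmod.
Hypothesis DT : forall u, D (T u) = T (D u).

Lemma average_comm u : average (D u) = D (average u).
Proof.
rewrite /average raddf_divn // raddf_sum; congr (_ / _); apply: eq_bigr => i _.
by elim: (nat_of_ord i) => //= j ->; rewrite DT.
Qed.

Lemma fixed_summand_eq_image_average g c G H :
  T c = c -> T g - g + c = T G - G + D H -> c = D (average H).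
Proof.
move=> Tc /(congr1 average).
rewrite (raddfD average (T g - g)) (raddfD average (T G - G)) /=.
rewrite !average_coboundary !add0r.
by rewrite average_fixed_id // average_comm.
Qed.

End Averaging.

Arguments average {F} m T u.

Section FracRepr.
Context {R : idomainType}.
Implicit Types (n d : R) (u : {fraction R}).

Lemma fden_neq0 u : fden u != 0.
Proof. by have /andP[] := xchooseP (frac_repr u). Qed.

Lemma fracE u : u = (fnum u)%:F / (fden u)%:F.
Proof. by have /andP[_ /eqP] := xchooseP (frac_repr u). Qed.

Lemma fracW (P : {fraction R} -> Prop) :
  (forall n d, d != 0 -> P (n%:F / d%:F)) -> forall u, P u.
Proof. by move=> P_frac u; rewrite (fracE u); apply/P_frac/fden_neq0. Qed.

Lemma eqr_frac n d n' d' : d != 0 -> d' != 0 ->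
  (n%:F / d%:F == n'%:F / d'%:F :> {fraction R}) = (n * d' == n' * d).
Proof. by move=> d0 d'0; rewrite eqr_div ?tofrac_eq0 // -!tofracM tofrac_eq. Qed.

Lemma fnum_fden_cross n d :
  d != 0 -> fnum (n%:F / d%:F) * d = n * fden (n%:F / d%:F).
Proof. by move=> d0; apply/eqP; rewrite -eqr_frac ?fden_neq0 // -fracE. Qed.

Lemma subf_frac n d n' d' : d != 0 -> d' != 0 ->
  n%:F / d%:F - n'%:F / d'%:F = (n * d' - n' * d)%:F / (d * d')%:F :> {fraction R}.
Proof.
move=> d0 d'0; rewrite -mulNr addf_div ?tofrac_eq0 //.
by rewrite mulNr -!tofracM -tofracB.
Qed.

End FracRepr.

Section FracLift.
Context {R : idomainType} {phi : {rmorphism R -> R}}.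
Hypothesis phi_inj : injective phi.

Lemma rmorph_inj_eq0 d : (phi d == 0) = (d == 0).
Proof. by rewrite -{1}(rmorph0 phi) (inj_eq phi_inj). Qed.

Lemma frac_lift_frac n d :
  d != 0 -> frac_lift phi (n%:F / d%:F) = (phi n)%:F / (phi d)%:F.
Proof.
move=> d0; rewrite /frac_lift; apply/eqP.
by rewrite eqr_frac ?rmorph_inj_eq0 ?fden_neq0 // -!rmorphM fnum_fden_cross.
Qed.

Lemma frac_lift_is_zmod_morphism : zmod_morphism (frac_lift phi).
Proof.
elim/(@fracW R)=> a b b0; elim/(@fracW R)=> c e e0.
have [b'0 e'0] : phi b != 0 /\ phi e != 0 by rewrite !rmorph_inj_eq0.
rewrite subf_frac // !frac_lift_frac ?mulf_neq0 // subf_frac //.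
by rewrite (rmorphB phi) !(rmorphM phi).
Qed.

Lemma frac_lift_comp (psi : R -> R) u :
  psi (fden u) != 0 -> frac_lift phi (frac_lift psi u) = frac_lift (phi \o psi) u.
Proof. by move=> psi_d0; rewrite [frac_lift psi u]/frac_lift frac_lift_frac. Qed.

Lemma iter_frac_lift i u : iter i (frac_lift phi) u = frac_lift (iter i phi) u.
Proof.
elim: i => [|i IH] /=; first by rewrite /frac_lift -fracE.
have iter_d0 : iter i phi (fden u) != 0.
  by elim: i {IH} => [|i IHi] /=; rewrite ?rmorph_inj_eq0 ?fden_neq0.
by rewrite IH frac_lift_comp.
Qed.

Lemma frac_lift_fixed m u : (0 < m)%N -> (forall p, iter m phi p = p) ->
  frac_lift phi u = u ->
  exists n d, [/\ d != 0, phi n = n, phi d = d & u = n%:F / d%:F].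
Proof.
move=> m_gt0 phi_order; elim/(@fracW R): u => a b b0 fixed.
have [n m_eq] : exists n, m = n.+1 by exists m.-1; rewrite prednK.
have iter_b0 i : iter i phi b != 0 by elim: i => //= i; rewrite rmorph_inj_eq0.
pose E := \prod_(i < n) iter i.+1 phi b.
have E0 : E != 0 by apply/prodf_neq0 => i _.
have norm_bE : \prod_(i < m) iter i phi b = b * E.
  by rewrite m_eq big_ord_recl; under eq_bigr do rewrite lift0.
have phi_bE : phi (b * E) = b * E.
  rewrite -norm_bE rmorph_prod; under eq_bigr do rewrite -iterS.
  exact: (@big_ord_cycle _ _ _ _ (fun i => iter i phi b) (phi_order b)).
have /eqP cross : phi a * b == a * phi b.
  by rewrite -eqr_frac ?rmorph_inj_eq0 // -frac_lift_frac // fixed.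
exists (a * E), (b * E); split; rewrite ?mulf_neq0 //.
  apply: (mulIf b0) => /=.
  by rewrite rmorphM mulrAC cross -[LHS]mulrA -rmorphM phi_bE; ring.
by apply/eqP; rewrite eqr_frac ?mulf_neq0 //; apply/eqP; ring.
Qed.

End FracLift.

Arguments frac_lift_fixed {R phi} phi_inj {m u}.

Lemma frac_lift_id (R : idomainType) (psi : R -> R) : psi =1 id -> frac_lift psi =1 id.
Proof. by move=> psi_id u; rewrite /frac_lift !psi_id -fracE. Qed.

Lemma frac_lift_comm {R : idomainType} {phi psi : {rmorphism R -> R}} :
  injective phi -> injective psi -> (forall p, phi (psi p) = psi (phi p)) ->
  forall u, frac_lift phi (frac_lift psi u) = frac_lift psi (frac_lift phi u).
Proof.
move=> phi_inj psi_inj comm u.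
rewrite !frac_lift_comp ?(rmorph_inj_eq0 phi_inj, rmorph_inj_eq0 psi_inj) ?fden_neq0 //.
by rewrite /frac_lift /= !comm.
Qed.

(* By definition, [D_y] is [frac_deriv DyP]. *)
Definition frac_deriv {R : idomainType} (delta : R -> R) (u : {fraction R}) :
    {fraction R} :=
  (delta (fnum u) * fden u - fnum u * delta (fden u))%:F / (fden u ^+ 2)%:F.

Section FracDeriv.
Context {R : idomainType} {delta : R -> R}.
Hypothesis delta_zmod : zmod_morphism delta.
Hypothesis deltaM : forall a b, delta (a * b) = delta a * b + a * delta b.

Lemma frac_deriv_frac n d : d != 0 ->
  frac_deriv delta (n%:F / d%:F) = (delta n * d - n * delta d)%:F / (d ^+ 2)%:F.
Proof.
move=> d0; rewrite /frac_deriv; have := fnum_fden_cross n d d0.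
move: (fnum _) (fden _) (fden_neq0 (n%:F / d%:F)) => N D D0 cross.
have dcross : delta N * d + N * delta d = delta n * D + n * delta D.
  by rewrite -!deltaM cross.
apply/eqP; rewrite eqr_frac ?expf_neq0 //; rewrite -subr_eq0; apply/eqP.
transitivity (d * D * ((delta N * d + N * delta d) - (delta n * D + n * delta D))
  - (delta D * d + delta d * D) * (N * d - n * D)); first by ring.
by rewrite dcross cross !subrr !mulr0 subrr.
Qed.

Lemma frac_deriv_is_zmod_morphism : zmod_morphism (frac_deriv delta).
Proof.
elim/(@fracW R)=> a b b0; elim/(@fracW R)=> c e e0.
rewrite subf_frac // !frac_deriv_frac ?mulf_neq0 // subf_frac ?expf_neq0 //.
apply/eqP; rewrite eqr_frac ?mulf_neq0 ?expf_neq0 //; apply/eqP.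
by rewrite delta_zmod !deltaM; ring.
Qed.

Lemma frac_deriv_lift {phi : {rmorphism R -> R}} :
  injective phi -> (forall a, delta (phi a) = phi (delta a)) ->
  forall u, frac_deriv delta (frac_lift phi u) = frac_lift phi (frac_deriv delta u).
Proof.
move=> phi_inj comm; elim/(@fracW R)=> n d d0.
have phi_d0 : phi d != 0 by rewrite (rmorph_inj_eq0 phi_inj).
rewrite frac_lift_frac // !frac_deriv_frac // frac_lift_frac ?expf_neq0 //.
by rewrite (rmorphXn phi) (rmorphB phi) !(rmorphM phi) !comm.
Qed.

End FracDeriv.

HB.instance Definition _ (k : fieldType) (q : k) :=
  GRing.RMorphism.copy (@tauP k q) (comp_poly (q%:P *: 'X)).
HB.instance Definition _ (k : fieldType) :=
  GRing.RMorphism.copy (@sigmaP k) (map_poly (comp_poly ('X + 1))).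
HB.instance Definition _ (k : fieldType) :=
  GRing.Additive.copy (@DyP k) (map_poly (@deriv _)).

Section XYPolynomials.
Context {k : fieldType}.
Implicit Types (q r : k) (p : {poly {poly k}}).

Lemma coef_tauP q p i : (tauP q p)`_i = (q ^+ i)%:P * p`_i.
Proof.
rewrite coef_comp_poly.
under eq_bigr do rewrite exprZn coefZ coefXn mulrA mulr_natr mulrb eq_sym.
rewrite -big_mkcond (big_ord1_eq _ (fun j => p`_j * q%:P ^+ j)) mulrC polyC_exp.
by case: ltnP => // size_le; rewrite nth_default ?mulr0.
Qed.

Lemma tauP_tauP q r p : tauP q (tauP r p) = tauP (q * r) p.
Proof. by apply/polyP => i; rewrite !coef_tauP mulrA -polyCM -exprMn. Qed.

Lemma tauP1 p : tauP 1 p = p.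
Proof. by apply/polyP => i; rewrite coef_tauP expr1n mul1r. Qed.

Lemma iter_tauP i q p : iter i (tauP q) p = tauP (q ^+ i) p.
Proof. by elim: i => [|i IH] /=; rewrite ?tauP1 // IH tauP_tauP -exprS. Qed.

Lemma tauP_inj q : q != 0 -> injective (tauP q).
Proof.
move=> q0 p p' /polyP tau_eq; apply/polyP => i.
have qi0 : (q ^+ i)%:P != 0 by rewrite polyC_eq0 expf_neq0.
by apply: (mulfI qi0); rewrite -!coef_tauP tau_eq.
Qed.

Lemma tauP_comp_Xn q m P : q ^+ m = 1 -> tauP q (P \Po 'X^m) = P \Po 'X^m.
Proof.
by move=> qm; rewrite /tauP -comp_polyA comp_Xn_poly exprZn -polyC_exp qm scale1r.
Qed.

Lemma tauP_fixed q m p : (0 < m)%N -> (forall n, (0 < n < m)%N -> q ^+ n != 1) ->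
  q ^+ m = 1 -> tauP q p = p -> exists P, p = P \Po 'X^m.
Proof.
move=> m_gt0 q_min qm tau_p.
have coef_ndvd j : ~~ (m %| j)%N -> p`_j = 0.
  move=> m_ndvd_j.
  have qj : q ^+ j = q ^+ (j %% m).
    by rewrite {1}(divn_eq j m) exprD mulnC exprM qm expr1n mul1r.
  have /q_min qjm_neq1 : (0 < j %% m < m)%N.
    by rewrite ltn_pmod // andbT lt0n; exact: m_ndvd_j.
  move/polyP/(_ j): tau_p; rewrite coef_tauP qj => /eqP.
  rewrite -subr_eq0 -{2}[p`_j]mul1r -mulrBl mulf_eq0 subr_eq0 -polyC1.
  by rewrite (inj_eq polyC_inj) (negbTE qjm_neq1) => /eqP.
exists (\poly_(i < size p) p`_(i * m)); apply/polyP => j.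
rewrite coef_comp_poly_Xn //; case: ifPn => [m_dvd_j|/coef_ndvd //].
rewrite coef_poly divnK //; case: ltnP => // size_le.
by rewrite nth_default // (leq_trans size_le) // -{2}(divnK m_dvd_j) leq_pmulr.
Qed.

Lemma sigmaP_inj : injective (@sigmaP k).
Proof.
apply: (can_inj (g := map_poly (comp_poly ('X - 1)))) => p.
rewrite /sigmaP -map_poly_comp map_poly_id // => c _ /=.
by rewrite -comp_polyA comp_polyD comp_polyX comp_polyC subrK comp_polyXr.
Qed.

Lemma sigmaP_tauP q p : sigmaP (tauP q p) = tauP q (sigmaP p).
Proof. by rewrite /tauP /sigmaP map_comp_poly map_polyZ map_polyX /= comp_polyC. Qed.

Lemma coef_DyP p i : (DyP p)`_i = (p`_i)^`().
Proof. by rewrite coef_map_id0 // deriv0. Qed.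

Lemma DyPM p p' : DyP (p * p') = DyP p * p' + p * DyP p'.
Proof.
apply/polyP => i; rewrite coefD !coefM coef_DyP coefM raddf_sum -big_split /=.
by apply: eq_bigr => j _; rewrite derivM !coef_DyP.
Qed.

Lemma DyP_tauP q p : DyP (tauP q p) = tauP q (DyP p).
Proof.
apply/polyP => i; rewrite coef_DyP !coef_tauP coef_DyP.
by rewrite derivM derivC mul0r add0r.
Qed.

End XYPolynomials.

Arguments tauP_inj {k q}.
Arguments tauP_fixed {k q m p}.

Section ShiftX.
Context {k : fieldType} {q : k}.
Hypothesis q0 : q != 0.

Lemma tau_xq_is_zmod_morphism : zmod_morphism (tau_xq q).
Proof. exact: frac_lift_is_zmod_morphism (tauP_inj q0). Qed.

#[local] HB.instance Definition _ :=
  GRing.isZmodMorphism.Build _ _ (tau_xq q) tau_xq_is_zmod_morphism.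

Lemma iter_tau_xq_order m u : q ^+ m = 1 -> iter m (tau_xq q) u = u.
Proof.
move=> qm; rewrite /tau_xq (iter_frac_lift (tauP_inj q0)); apply: frac_lift_id => p.
by rewrite iter_tauP qm tauP1.
Qed.

Lemma in_kyxm_tau_fixed m c : q ^+ m = 1 -> in_kyxm m c -> tau_xq q c = c.
Proof.
move=> qm [P [Q [_ ->]]]; have [->|Q0] := eqVneq (Q \Po 'X^m) 0.
  by rewrite tofrac0 invr0 mulr0 raddf0.
by rewrite /tau_xq (frac_lift_frac (tauP_inj q0)) //= !tauP_comp_Xn.
Qed.

Lemma tau_fixed_in_kyxm m u :
  (0 < m)%N -> (forall n, (0 < n < m)%N -> q ^+ n != 1) -> q ^+ m = 1 ->
  tau_xq q u = u -> in_kyxm m u.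
Proof.
move=> m_gt0 q_min qm tau_u.
have [|n [d [d0 n_fixed d_fixed ->]]] := frac_lift_fixed (tauP_inj q0) m_gt0 _ tau_u.
  by move=> p; rewrite iter_tauP qm tauP1.
have [P ->] := tauP_fixed m_gt0 q_min qm n_fixed.
have [Q dQ] := tauP_fixed m_gt0 q_min qm d_fixed.
exists P, Q; rewrite -dQ; split=> //.
by apply: contraNneq d0 => Q0; rewrite dQ Q0 comp_poly0.
Qed.

End ShiftX.

Arguments iter_tau_xq_order {k q} q0 {m}.
Arguments in_kyxm_tau_fixed {k q} q0 {m c}.
Arguments tau_fixed_in_kyxm {k q} q0 {m u}.

Section PartialY.
Context {k : fieldType}.

Lemma sigma_y_is_zmod_morphism : zmod_morphism (@sigma_y k).
Proof. exact: frac_lift_is_zmod_morphism (@sigmaP_inj k). Qed.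

Lemma partial_y_is_zmod_morphism o : zmod_morphism (@partial_y k o).
Proof.
case: o => /=; last exact: (frac_deriv_is_zmod_morphism (raddfB (@DyP k)) DyPM).
move=> u v; rewrite /Delta_y sigma_y_is_zmod_morphism !opprB.
by rewrite addrACA [RHS]addrACA [- u + _]addrC.
Qed.

Lemma partial_y_tau_xq (q : k) o u : q != 0 ->
  partial_y o (tau_xq q u) = tau_xq q (partial_y o u).
Proof.
move=> q0; have tau_inj := tauP_inj q0.
case: o => /=; last exact: (frac_deriv_lift DyPM tau_inj (DyP_tauP q)).
have sigma_tau := frac_lift_comm (@sigmaP_inj k) tau_inj (sigmaP_tauP q).
by rewrite /Delta_y /sigma_y /tau_xq sigma_tau (frac_lift_is_zmod_morphism tau_inj).
Qed.

End PartialY.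

Lemma ratfun_natr_eq0 (k : fieldType) n :
  [pchar k] =i pred0 -> (n%:R == 0 :> ratfun k) = (n == 0)%N.
Proof.
move=> /pcharf0P char0.
rewrite -(rmorph_nat (@tofrac _)) tofrac_eq0.
by rewrite -polyC_natr polyC_eq0 -polyC_natr polyC_eq0.
Qed.

Theorem theorem1 (k : fieldType) (q : k) (m : nat) :
  [pchar k] =i pred0 ->
  (0 < m)%N -> q ^+ m = 1 ->
  (forall n : nat, (0 < n < m)%N -> q ^+ n != 1) ->
  (exists rs : seq k, [/\ uniq rs, size rs = m & all (fun z => z ^+ m == 1) rs]) ->
  forall (o : yop) (f g c : ratfun k),
    in_kyxm m c ->
    f = tau_xq q g - g + c ->
    (exact (Delta_xq q) (partial_y o) f <->
     exists d : ratfun k, in_kyxm m d /\ c = partial_y o d).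
Proof.
move=> char0 m_gt0 qm q_min _ o f g c c_kyxm ->; split; last first.
  by case=> d [_ ->]; exists g, d.
case=> G [H exact_f].
have q0 : q != 0.
  by apply: contraNneq (oner_neq0 k) => q_eq0; rewrite -qm q_eq0 expr0n gtn_eqF.
have m_neq0 : m%:R != 0 :> ratfun k by rewrite ratfun_natr_eq0 // -lt0n.
have tau_zmod := tau_xq_is_zmod_morphism q0.
have tau_order u := iter_tau_xq_order q0 u qm.
have dy_zmod := @partial_y_is_zmod_morphism k o.
have dy_tau u := partial_y_tau_xq q o u q0.
exists (average m (tau_xq q) H); split.
  apply: (tau_fixed_in_kyxm q0 m_gt0 q_min qm).
  exact: average_fixed tau_zmod m_neq0 tau_order H.
apply: (fixed_summand_eq_image_average tau_zmod m_neq0 tau_order dy_zmod dy_tau) exact_f.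
exact: (in_kyxm_tau_fixed q0 qm c_kyxm).
Qed.
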